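(* Let $\lambda\in L'$ with $q(\lambda)<0$ and $\langle\lambda,\ell\rangle=0$, and let $J_\lambda([h,t],z)=\Psi_\lambda([0,t]z)/\Psi_\lambda(z)$ for $[h,t]\in\Gamma_\ell$, $z\in U_\epsilon(\ell)$. Then, for any $\zeta$ with $\mathcal{O}_\mathbf{k}=\mathbb{Z}+\zeta\mathbb{Z}$ and $\operatorname{Im}\zeta=|\delta|/2$, \[ J_\lambda([h,t], z) = e\Bigl( -2|d|\,\langle z,\lambda\rangle\operatorname{Re}\langle t,\lambda\rangle - 2\bigl(\operatorname{Re}\langle t,\lambda\rangle\bigr)^2\zeta + \operatorname{Re}\langle t,\lambda\rangle\,(\zeta +1) \Bigr); \] in particular the right-hand side does not depend on the choice of such $\zeta$.
   Context: Let $\mathbf{k}=\mathbb{Q}(\sqrt d)$ be imaginary quadratic of discriminant $d<0$ inside $\mathbb{C}$, ring of integers $\mathcal{O}_\mathbf{k}$, $\delta=\sqrt d$ (principal branch), inverse different $\mathfrak{d}^{-1}=\delta^{-1}\mathcal{O}_\mathbf{k}$; $e(x)=\exp(2\pi ix)$. $V$ is a hermitian $\mathbf{k}$-space of signature $(1,n+1)$, $n\ge1$, form $\langle\cdot,\cdot\rangle$ linear in the left argument, $q(x)=\langle x,x\rangle$, $V_\mathbb{C}=V\otimes\mathbb{C}$; $L$ an even integral full-rank $\mathcal{O}_\mathbf{k}$-lattice, $L'=\{x:\langle x,y\rangle\in\mathfrak{d}^{-1}\ \forall y\in L\}$; $\Gamma$ a finite-index subgroup of the subgroup of $\mathrm{SU}(L)$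 acting trivially on $L'/L$. Fix primitive isotropic $\ell\in L$, $\ell'\in L'$ with $\langle\ell,\ell'\rangle=\delta^{-1}$. $D=L\cap\ell^\perp\cap\ell'^\perp$, $W=D\otimes\mathbf{k}$, $W_\mathbb{C}=W\otimes\mathbb{C}$. Siegel domain $\mathcal{H}=\{(\tau,\sigma)\in\mathbb{C}\times W_\mathbb{C}:2\operatorname{Im}(\tau)|\delta||\langle\ell,\ell'\rangle|^2>-\langle\sigma,\sigma\rangle\}$, points represented by $z=z(\tau,\sigma)=\ell'-\delta\tau\langle\ell',\ell\rangle\ell+\sigma\in V_\mathbb{C}$. Elements $[h,t]$ ($h\in\mathbb{Q}$, $t\in W$) of the Heisenberg group act on $V_\mathbb{C}$ by $[h,0]:v\mapsto v-\langle v,\ell\rangle\delta h\ell$ and $[0,t]:v\mapsto v+\langle v,\ell\rangle t-\langle v,t\rangle\ell-\frac12\langle v,\ell\rangle\langle t,t\rangle\ell$, with group law $[h,t]\circ[h',t']=[h+h'+|\delta|^{-1}\operatorname{Im}\langle t',t\rangle,t+t']$. $\Gamma_\ell=\Gamma\cap$ Heisenberg group $=\{[h,t]:h\in N\mathbb{Z},t\in D_{\ell,\Gamma}\}$ for some $N\in\mathbb{Q}_{>0}$ and finite-index sublattice $D_{\ell,\Gamma}\subseteq D$. $U_\epsilon(\ell)=\{[z]:\langle z,z\rangle>0,\ \langle z,z\rangle|\langle\ell',\ell\rangle|^2/|\langle z,\ell\rangle|^2>1/\epsilon\}$ ($\epsilon>0$ small), identified with a subset of $\mathcal{H}$. The local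 Borcherds product is \[ \Psi_\lambda(z)=\prod_{\alpha\in\mathcal{O}_\mathbf{k}}\Bigl[1-e\Bigl(\sigma(\operatorname{Im}\alpha)\Bigl(\langle z,\lambda\rangle+\frac{\alpha}{|d|}\Bigr)\Bigr)\Bigr],\qquad \sigma(x)=1\text{ if }x\ge0,\ \sigma(x)=-1\text{ otherwise}, \] an absolutely convergent product on $U_\epsilon(\ell)$. *)

From HB Require Import structures.
From mathcomp Require Import all_boot all_order all_algebra.
From mathcomp Require Import all_classical all_reals all_analysis.
From mathcomp Require Import complex.
Import Order.TTheory GRing.Theory Num.Theory.
Import numFieldTopology.Exports numFieldNormedType.Exports.
Import ComplexField.

Set Implicit Arguments.
Unset Strict Implicit.
Unset Printing Implicit Defensive.

Local Open Scope ring_scope.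
Local Open Scope complex_scope.
Local Open Scope classical_set_scope.

Section Defs.
Variable R : realType.
Local Notation C := R[i].

Definition sqfree_int (m : int) : Prop :=
  forall p : nat, prime p -> ~ ((p * p)%:Z %| m)%Z.

Definition neg_fund_disc (d : int) : Prop :=
  (d < 0)%R /\
  ( ((d %% 4)%Z = 1 /\ sqfree_int d) \/
    (exists m : int, d = 4 * m /\ ((m %% 4)%Z = 2 \/ (m %% 4)%Z = 3)
                     /\ sqfree_int m) ).

(* delta = sqrt d, principal branch: for d < 0 this is i * sqrt |d| *)
Definition delta (d : int) : C := 0 +i* Num.sqrt (- (d%:~R : R)).

Definition omega (d : int) : C := ((d%:~R : R) +i* 0 + delta d) / 2.

Definition in_k (d : int) (x : C) : Prop :=
  exists a b : rat, x = ratr a + ratr b * delta d.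

Definition in_Ok (d : int) (x : C) : Prop :=
  exists a b : int, x = a%:~R + b%:~R * omega d.

(* elements of the inverse different d^{-1} = delta^{-1} O_k *)
Definition in_dinv (d : int) (x : C) : Prop := in_Ok d (x * delta d).

(* e(x) = exp(2 pi i x) *)
Definition ee (x : C) : C :=
  let r := expR (- (2 * pi * complex.Im x)) in
  (r * cos (2 * pi * complex.Re x)) +i* (r * sin (2 * pi * complex.Re x)).

Definition sgn0 (x : R) : C := if (0 <= x)%R then 1 else -1.

Definition clim (u : nat -> C) : C :=
  lim ((fun N => complex.Re (u N)) @ \oo) +i* lim ((fun N => complex.Im (u N)) @ \oo).

Variable m : nat.
Local Notation vec := 'rV[C]_m.

(* <x, y> = x H y^*, linear in the left argument *)
Definition herm (H : 'M[C]_m) (x y : vec) : C :=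
  (x *m H *m (map_mx conjc y)^T) 0 0.

Definition diag_sig : 'M[C]_m :=
  \matrix_(i, j) (if i == j then (if (i == 0 :> nat) then 1 else -1) else 0).

Definition herm_k_sig (d : int) (H : 'M[C]_m) : Prop :=
  H^T = map_mx conjc H /\
  (forall i j, in_k d (H i j)) /\
  exists P : 'M[C]_m, P \in unitmx /\ P *m H *m (map_mx conjc P)^T = diag_sig.

Definition in_V (d : int) (x : vec) : Prop := forall i, in_k d (x 0 i).

Definition is_lattice (d : int) (L : set vec) : Prop :=
  exists gens : seq vec,
    (forall v, v \in gens -> in_V d v) /\
    \rank (\matrix_(i < size gens, j < m) (gens`_i) 0 j) = m /\
    L = [set x | exists c : 'I_(size gens) -> C,
                   (forall i, in_Ok d (c i)) /\
                   x = \sum_(i < size gens) c i *: gens`_i].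

Definition even_integral (d : int) (H : 'M[C]_m) (L : set vec) : Prop :=
  (forall x y, L x -> L y -> in_dinv d (herm H x y)) /\
  (forall x, L x -> exists k : int, herm H x x = k%:~R).

Definition dual (d : int) (H : 'M[C]_m) (L : set vec) : set vec :=
  [set x | in_V d x /\ forall y, L y -> in_dinv d (herm H x y)].

Definition primitive (d : int) (L : set vec) (l : vec) : Prop :=
  L l /\ l != 0 /\ forall c : C, in_k d c -> L (c *: l) -> in_Ok d c.

Definition Dlat (H : 'M[C]_m) (L : set vec) (l l' : vec) : set vec :=
  [set x | L x /\ herm H x l = 0 /\ herm H x l' = 0].

(* action of the Heisenberg element [0,t] on V_C *)
Definition heis0 (H : 'M[C]_m) (l t v : vec) : vec :=
  v + herm H v l *: t - herm H v t *: l
    - (herm H v l * herm H t t / 2) *: l.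

Definition zpt (d : int) (H : 'M[C]_m) (l l' : vec) (tau : C) (sig : vec)
  : vec :=
  l' - (delta d * tau * herm H l' l) *: l + sig.

(* The product runs over alpha in O_k modulo
   |d| Z (the factor only depends on alpha mod |d| Z); representatives are
   alpha = a + b*omega, 0 <= a < |d|, b in Z, and the absolutely convergent
   product is evaluated as the limit of the partial products over |b| <= N. *)
Definition Psi_factor (d : int) (w alpha : C) : C :=
  1 - ee (sgn0 (complex.Im alpha) * (w + alpha / (`|d|%:R))).

Definition Psi (d : int) (H : 'M[C]_m) (lam z : vec) : C :=
  clim (fun N : nat =>
    \prod_(k < N.*2.+1) \prod_(a < `|d|%N)
      Psi_factor d (herm H z lam)
        (a%:R + ((k%:Z - N%:Z)%:~R) * omega d)).

End Defs.
Arguments delta {R} d.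
Arguments omega {R} d.

From HB Require Import structures.
From mathcomp Require Import all_boot all_order all_algebra.
From mathcomp Require Import all_classical all_reals all_analysis.
From mathcomp Require Import complex.
From mathcomp Require Import ring lra zify.
Import Order.TTheory GRing.Theory Num.Theory.
Import numFieldTopology.Exports numFieldNormedType.Exports.
Import ComplexField.
Import Normc.
Local Open Scope ring_scope.
Local Open Scope complex_scope.
Local Open Scope classical_set_scope.

(* Write w = <z, lambda>.  Psi_lambda(z) is the limit of the symmetric partial
   products over the rows |b| <= N of the |d| factors
   1 - e(sigma(b) (w + (a + b omega)/|d|)), and row b lies within O(q^|b|) of 1
   for some q < 1, so these products converge (this has to be proved: clim is a
   junk value on divergent sequences), and so do the same products shifted by
   finitely many rows, to the same limit.
   As <l, lambda> = 0, the Heisenberg element [0,t] only changes w by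
   conj(delta)^-1 <t, lambda> = (c + e omega)/|d| with c, e integers and
   e = 2 Re <t, lambda>.  This moves row b to row b + e (the shift by c only
   permutes a modulo |d|) but keeps the sign sigma(b).  On the |e| rows where
   sigma(b) and sigma(b + e) differ, 1 - e(-y) = -e(-y) (1 - e(y)) restores the
   right sign at the cost of factors whose product is
   e(e/2 - e |d| w - omega e (e - 1)/2); the rest is the shifted product.
   Finally zeta = a + omega for an integer a, and the two exponents differ by
   the integer a e (e - 1)/2. *)

Section ComplexParts.
Context {R : realType}.
Local Notation C := R[i].

Lemma realC_nat (k : nat) : (k%:R : C) = (k%:R : R)%:C.
Proof. by rewrite rmorph_nat. Qed.

Lemma realC_int (k : int) : (k%:~R : C) = (k%:~R : R)%:C.
Proof. by rewrite rmorph_int. Qed.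

Lemma ReB (x y : C) : complex.Re (x - y) = complex.Re x - complex.Re y.
Proof. by case: x; case: y. Qed.

Lemma ImB (x y : C) : complex.Im (x - y) = complex.Im x - complex.Im y.
Proof. by case: x; case: y. Qed.

Lemma ImD (x y : C) : complex.Im (x + y) = complex.Im x + complex.Im y.
Proof. by case: x; case: y. Qed.

Lemma Im_realCM (r : R) (y : C) : complex.Im (r%:C * y) = r * complex.Im y.
Proof. by case: y => a b /=; rewrite mul0r addr0. Qed.

Lemma Im_divr_nat (y : C) (n : nat) : complex.Im (y / n%:R) = complex.Im y / n%:R.
Proof. by rewrite realC_nat -fmorphV mulrC Im_realCM mulrC. Qed.

Lemma sgn0E (x : R) : sgn0 x = (if 0 <= x then 1 else -1 : R)%:C.
Proof. by rewrite /sgn0; case: ifP; rewrite ?rmorphN1. Qed.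

End ComplexParts.

Section ExpTwoPiI.
Context {R : realType}.
Local Notation C := R[i].

Lemma ee_real (r : R) : ee r%:C = cos (2 * pi * r) +i* sin (2 * pi * r).
Proof. by rewrite /ee /= mulr0 oppr0 expR0 !mul1r. Qed.

Lemma eeD (x y : C) : ee (x + y) = ee x * ee y.
Proof.
case: x => a b; case: y => c e; rewrite /ee /=.
rewrite !mulrDr opprD expRD cosD sinD.
by apply/eqP; rewrite eq_complex /=; apply/andP; split; apply/eqP; ring.
Qed.

Lemma ee0 : ee (0 : C) = 1.
Proof. by rewrite -[0]/((0 : R)%:C) ee_real mulr0 cos0 sin0. Qed.

Lemma eeNK (x : C) : ee (- x) * ee x = 1.
Proof. by rewrite -eeD addNr ee0. Qed.

Lemma ee_nat (k : nat) : ee (k%:R : C) = 1.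
Proof.
elim: k => [|k IHk]; first exact: ee0.
rewrite -natr1 eeD IHk mul1r -[1]/((1 : R)%:C) ee_real mulr1.
by rewrite mulr_natl cos2pi sin2pi.
Qed.

Lemma ee_int (k : int) : ee (k%:~R : C) = 1.
Proof.
case: k => k; first exact: ee_nat.
by have := eeNK (k.+1%:R : C); rewrite ee_nat mulr1 NegzE intrN -pmulrn.
Qed.

Lemma ee_addz (x : C) (k : int) : ee (x + k%:~R) = ee x.
Proof. by rewrite eeD ee_int mulr1. Qed.

Lemma ee_half : ee (2^-1 : C) = -1.
Proof.
rewrite realC_nat -fmorphV ee_real.
have -> : 2 * pi * 2^-1 = pi :> R by field.
by rewrite cospi sinpi; apply/eqP; rewrite eq_complex /= oppr0 !eqxx.
Qed.

Lemma oppr_ee (x : C) : - ee x = ee (2^-1 + x).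
Proof. by rewrite eeD ee_half mulN1r. Qed.

Lemma prod_ee {I : Type} (r : seq I) (P : pred I) (f : I -> C) :
  \prod_(i <- r | P i) ee (f i) = ee (\sum_(i <- r | P i) f i).
Proof. by elim/big_rec2: _ => [|i y _ _ ->]; rewrite ?ee0 ?eeD. Qed.

Lemma normc_ee (x : C) : normc (ee x) = expR (- (2 * pi * complex.Im x)).
Proof.
rewrite /ee /normc /= !exprMn -mulrDr cos2Dsin2 mulr1.
by rewrite sqrtr_sqr ger0_norm // expR_ge0.
Qed.

End ExpTwoPiI.

Section NormcBounds.
Context {R : realType}.
Local Notation C := R[i].

Lemma normc_ge0 (x : C) : 0 <= normc x.
Proof. by case: x => a b; rewrite /normc sqrtr_ge0. Qed.

Lemma normcB (x y : C) : normc (x - y) = normc (y - x).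
Proof. by rewrite -normcN opprB. Qed.

Lemma normc_Re (z : C) : `|complex.Re z| <= normc z.
Proof.
by case: z => a b; rewrite /normc -sqrtr_sqr ler_wsqrtr // lerDl sqr_ge0.
Qed.

Lemma normc_Im (z : C) : `|complex.Im z| <= normc z.
Proof.
by case: z => a b; rewrite /normc -sqrtr_sqr ler_wsqrtr // lerDr sqr_ge0.
Qed.

Lemma normc_le_ReIm (z : C) : normc z <= `|complex.Re z| + `|complex.Im z|.
Proof.
case: z => a b; rewrite /normc /=.
have ha := normr_ge0 a; have hb := normr_ge0 b.
have ea : `|a| ^+ 2 = a ^+ 2 by rewrite real_normK ?num_real.
have eb : `|b| ^+ 2 = b ^+ 2 by rewrite real_normK ?num_real.
rewrite -(ger0_norm (addr_ge0 ha hb)) -sqrtr_sqr ler_wsqrtr //; nra.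
Qed.

Lemma normc_prod {I : Type} (r : seq I) (f : I -> C) :
  normc (\prod_(i <- r) f i) = \prod_(i <- r) normc (f i).
Proof. by elim/big_rec2: _ => [|i x y _ <-]; rewrite ?normc1 ?normcM. Qed.

Lemma normc_prodD1_sub1 {I : Type} (r : seq I) (u : I -> C) :
  normc (\prod_(i <- r) (1 + u i) - 1) <= \prod_(i <- r) (1 + normc (u i)) - 1.
Proof.
elim: r => [|a r IH]; first by rewrite !big_nil subrr normc0.
rewrite !big_cons.
set P := \prod_(i <- r) (1 + u i) in IH *.
set Q := \prod_(i <- r) (1 + normc (u i)) in IH *.
have -> : (1 + u a) * P - 1 = (1 + u a) * (P - 1) + u a by ring.
apply: le_trans (le_normcD _ _) _; rewrite normcM.
have h1 : normc (1 + u a) <= 1 + normc (u a) by have := le_normcD 1 (u a); rewrite normc1.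
have h2 : normc (1 + u a) * normc (P - 1) <= (1 + normc (u a)) * (Q - 1).
  by apply: ler_pM => //; exact: normc_ge0.
have := normc_ge0 (u a); nra.
Qed.

Lemma prodD1_le_expR {I : Type} (r : seq I) (a : I -> R) :
  (forall i, 0 <= a i) -> \prod_(i <- r) (1 + a i) <= expR (\sum_(i <- r) a i).
Proof.
move=> a_ge0; elim: r => [|i r IH]; first by rewrite !big_nil expR0.
rewrite !big_cons expRD; apply: ler_pM => //.
- by rewrite addr_ge0.
- by apply: prodr_ge0 => j _; rewrite addr_ge0.
- exact: expR_ge1Dx.
Qed.

Lemma expR_sub1_le (y : R) : 0 <= y -> expR y - 1 <= y * expR y.
Proof.
move=> y_ge0; have := expR_ge1Dx (- y); rewrite expRN => h.
have ey := expR_gt0 y.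
have : (1 - y) * expR y <= (expR y)^-1 * expR y by rewrite ler_pM2r.
rewrite mulVf ?gt_eqF //; nra.
Qed.

Lemma normc_prodD1_sub1_le (n : nat) (u : 'I_n -> C) (c x : R) :
  0 <= c -> 0 <= x <= 1 -> (forall k, normc (u k) <= c * x) ->
  normc (\prod_(k < n) (1 + u k) - 1) <= n%:R * c * expR (n%:R * c) * x.
Proof.
move=> c_ge0 /andP[x_ge0 x_le1] hu.
set S := \sum_(k < n) normc (u k).
have S_ge0 : 0 <= S by rewrite sumr_ge0 // => k _; exact: normc_ge0.
have S_le : S <= n%:R * c * x.
  have -> : n%:R * c * x = \sum_(k < n) c * x.
    by rewrite sumr_const card_ord mulr_natl mulrnAl.
  by apply: ler_sum => k _; exact: hu.
have S_le' : S <= n%:R * c.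
  by apply: le_trans S_le _; rewrite ler_piMr // mulr_ge0.
apply: le_trans (normc_prodD1_sub1 _ _) _.
apply: (@le_trans _ _ (expR S - 1)).
  by rewrite lerB // prodD1_le_expR // => k; exact: normc_ge0.
apply: le_trans (expR_sub1_le _ S_ge0) _.
by rewrite mulrAC; apply: ler_pM => //; rewrite ler_expR.
Qed.

End NormcBounds.

Section SymmetricWindows.
Context {T : Type} {idx : T} {op : Monoid.com_law idx}.

Lemma big_ord_mknat (F : nat -> T) (n : nat) :
  \big[op/idx]_(k < n) F k = \big[op/idx]_(0 <= k < n) F k.
Proof. exact: (esym (big_mkord xpredT F)). Qed.

Lemma big_sym_window_succ (F : int -> T) (N : nat) :
  \big[op/idx]_(k < N.+1.*2.+1) F (k%:Z - N.+1%:Z) =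
  op (F (- N.+1%:Z)) (op (\big[op/idx]_(k < N.*2.+1) F (k%:Z - N%:Z)) (F N.+1%:Z)).
Proof.
rewrite (big_ord_mknat (fun k => F (k%:Z - N.+1%:Z))).
rewrite (big_ord_mknat (fun k => F (k%:Z - N%:Z))).
rewrite doubleS big_nat_recl // big_nat_recr //=.
congr (op (F _) (op _ (F _))); try lia.
by apply: eq_bigr => k _; congr F; lia.
Qed.

Lemma big_sym_window_addn (F : int -> T) (N e : nat) :
  \big[op/idx]_(k < (N + e).*2.+1) F (k%:Z - (N + e)%:Z) =
  op (\big[op/idx]_(k < e.*2) F (k%:Z - (N + e)%:Z))
     (\big[op/idx]_(k < N.*2.+1) F (k%:Z - N%:Z + e%:Z)).
Proof.
rewrite (big_ord_mknat (fun k => F (k%:Z - (N + e)%:Z))).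
rewrite (big_ord_mknat (fun k => F (k%:Z - (N + e)%:Z))).
rewrite (big_ord_mknat (fun k => F (k%:Z - N%:Z + e%:Z))).
rewrite (big_cat_nat _ (n := e.*2)) //=; last by lia.
congr (op _ _); rewrite -{1}(add0n e.*2) big_addn.
have -> : ((N + e).*2.+1 - e.*2 = N.*2.+1)%N by lia.
by apply: eq_bigr => k _; congr F; lia.
Qed.

Lemma big_sym_window_subn (F : int -> T) (N e : nat) :
  \big[op/idx]_(k < (N + e).*2.+1) F (k%:Z - (N + e)%:Z) =
  op (\big[op/idx]_(k < N.*2.+1) F (k%:Z - N%:Z - e%:Z))
     (\big[op/idx]_(k < e.*2) F ((N.*2.+1 + k)%:Z - (N + e)%:Z)).
Proof.
rewrite (big_ord_mknat (fun k => F (k%:Z - (N + e)%:Z))).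
rewrite (big_ord_mknat (fun k => F (k%:Z - N%:Z - e%:Z))).
rewrite (big_ord_mknat (fun k => F ((N.*2.+1 + k)%:Z - (N + e)%:Z))).
rewrite (big_cat_nat _ (n := N.*2.+1)) //=; last by lia.
congr (op _ _); first by apply: eq_bigr => k _; congr F; lia.
rewrite -{1}(add0n N.*2.+1) big_addn.
have -> : ((N + e).*2.+1 - N.*2.+1 = e.*2)%N by lia.
by apply: eq_bigr => k _; congr F; lia.
Qed.

Lemma big_ord_window (F : nat -> T) (m n p : nat) : (m <= n <= p)%N ->
  \big[op/idx]_(k < p) (if (m <= k < n)%N then F k else idx) = \big[op/idx]_(m <= k < n) F k.
Proof.
case/andP=> mn np; rewrite (big_ord_mknat (fun k => if (m <= k < n)%N then F k else idx)).
rewrite (big_cat_nat (leq0n m) (leq_trans mn np)) (big_cat_nat mn np) /=.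
rewrite [X in op X _]big1_seq => [|k /andP[_]]; last first.
  by rewrite mem_index_iota; case: ifP => //; lia.
rewrite [X in op _ (op _ X)]big1_seq => [|k /andP[_]]; last first.
  by rewrite mem_index_iota; case: ifP => //; lia.
rewrite Monoid.mul1m Monoid.mulm1.
by apply: eq_big_nat => k /andP[mk kn]; rewrite mk kn.
Qed.

Lemma big_int_period (F : int -> T) (P : nat) (c : int) :
  (forall x, F (x + P%:Z) = F x) ->
  \big[op/idx]_(a < P) F (a%:Z + c) = \big[op/idx]_(a < P) F a%:Z.
Proof.
move=> FP.
have step c' : \big[op/idx]_(a < P) F (a%:Z + (c' + 1)) = \big[op/idx]_(a < P) F (a%:Z + c').
  case: P FP => [|P] FP; first by rewrite !big_ord0.
  rewrite big_ord_recr big_ord_recl /= Monoid.mulmC.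
  congr (op _ _); first by rewrite -[RHS]FP; congr F; lia.
  by apply: eq_bigr => k _; congr F; rewrite /bump leq0n /= PoszD; lia.
have shiftn (k : nat) : \big[op/idx]_(a < P) F (a%:Z + k%:Z) = \big[op/idx]_(a < P) F a%:Z.
  elim: k => [|k IHk]; first by apply: eq_bigr => a _; rewrite addr0.
  by rewrite -IHk -(step k%:Z); apply: eq_bigr => a _; congr F; lia.
have shiftN (k : nat) : \big[op/idx]_(a < P) F (a%:Z - k%:Z) = \big[op/idx]_(a < P) F a%:Z.
  elim: k => [|k IHk]; first by apply: eq_bigr => a _; rewrite subr0.
  by rewrite -IHk -(step (- k.+1%:Z)); apply: eq_bigr => a _; congr F; lia.
by case: c => k; rewrite ?NegzE ?shiftn ?shiftN.
Qed.
End SymmetricWindows.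

Section ComplexLimits.
Context {R : realType}.
Local Notation C := R[i].

Definition cvgc (u : nat -> C) (l : C) :=
  forall eps : R, 0 < eps -> exists N0, forall N, (N0 <= N)%N -> normc (u N - l) < eps.

Lemma normc_ReB (x y : C) : `|complex.Re x - complex.Re y| <= normc (x - y).
Proof. by rewrite -ReB normc_Re. Qed.

Lemma normc_ImB (x y : C) : `|complex.Im x - complex.Im y| <= normc (x - y).
Proof. by rewrite -ImB normc_Im. Qed.

Lemma cvgc_proj {p : C -> R} {u : nat -> C} {l : C} :
  (forall x y, `|p x - p y| <= normc (x - y)) -> cvgc u l ->
  (fun N => p (u N)) @ \oo --> p l.
Proof.
move=> hp ul; apply/cvgrPdist_lt => eps e0; have [N0 H] := ul eps e0.
exists N0 => // N /= hN; rewrite distrC.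
exact: le_lt_trans (hp _ _) (H N hN).
Qed.

Lemma cvgc_clim (u : nat -> C) (l : C) : cvgc u l -> clim u = l.
Proof.
move=> ul; have := cvgc_proj normc_ImB ul; have := cvgc_proj normc_ReB ul.
by case: l {ul} => a b ReP ImP; congr Complex; apply: cvg_lim.
Qed.

Lemma geometric_eventually_lt {a q eps : R} : 0 <= a -> 0 <= q -> q < 1 ->
  0 < eps -> exists N0, forall N, (N0 <= N)%N -> a * q ^+ N < eps.
Proof.
move=> a_ge0 q_ge0 q_lt1 e0.
have e1 : 0 < eps / (a + 1) by rewrite divr_gt0 // ltr_wpDl.
have q_norm : `|q| < 1 by rewrite ger0_norm.
have /cvgrPdist_lt /(_ _ e1) [N _ HN] := cvg_expr q_norm.
exists N => n hn; have := HN n hn; rewrite /= sub0r normrN ger0_norm ?exprn_ge0 //.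
rewrite ltr_pdivlMr ?ltr_wpDl // => h.
have := exprn_ge0 n q_ge0; nra.
Qed.

Lemma cauchy_geometric_increments {u : nat -> C} {c q : R} :
  0 <= c -> 0 <= q -> q < 1 ->
  (forall N, normc (u N.+1 - u N) <= c * q ^+ N) ->
  forall N M, (N <= M)%N -> normc (u M - u N) <= c / (1 - q) * q ^+ N.
Proof.
move=> c_ge0 q_ge0 q_lt1 hu N M /subnKC <-.
have q1 : 1 - q != 0 by rewrite subr_eq0 gt_eqF.
suff key i : normc (u (N + i)%N - u N) <= c / (1 - q) * q ^+ N * (1 - q ^+ i).
  apply: le_trans (key _) _; rewrite ler_piMr ?gerBl ?exprn_ge0 //.
  by rewrite !mulr_ge0 ?exprn_ge0 // invr_ge0 subr_ge0 ltW.
elim: i => [|i IHi]; first by rewrite addn0 subrr normc0 expr0 subrr mulr0.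
have -> : u (N + i.+1)%N - u N = (u (N + i).+1 - u (N + i)%N) + (u (N + i)%N - u N).
  by rewrite addnS; ring.
have -> : c / (1 - q) * q ^+ N * (1 - q ^+ i.+1) =
    c * q ^+ (N + i) + c / (1 - q) * q ^+ N * (1 - q ^+ i).
  by rewrite exprD exprS; field.
exact: le_trans (le_normcD _ _) (lerD (hu _) IHi).
Qed.

Lemma cvg_proj_geometric_cauchy {p : C -> R} {u : nat -> C} {a q : R} :
  (forall x y, `|p x - p y| <= normc (x - y)) -> 0 <= a -> 0 <= q -> q < 1 ->
  (forall N M, (N <= M)%N -> normc (u M - u N) <= a * q ^+ N) ->
  cvg ((fun N => p (u N)) @ \oo).
Proof.
move=> hp a_ge0 q_ge0 q_lt1 hu; apply: cauchy_cvg; apply: cauchy_exP => eps e0.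
have [N0 HN] := geometric_eventually_lt a_ge0 q_ge0 q_lt1 e0.
exists (p (u N0)); exists N0 => // N /= hN.
rewrite -ball_normE /ball_ /=; apply: le_lt_trans (hp _ _) _.
by rewrite normcB; apply: le_lt_trans (hu _ _ hN) (HN _ (leqnn _)).
Qed.

Lemma cvgc_geometric_cauchy {u : nat -> C} {a q : R} :
  0 <= a -> 0 <= q -> q < 1 ->
  (forall N M, (N <= M)%N -> normc (u M - u N) <= a * q ^+ N) -> cvgc u (clim u).
Proof.
move=> a_ge0 q_ge0 q_lt1 hu eps e0; have e2 : 0 < eps / 2 by rewrite divr_gt0.
have /cvgrPdist_lt /(_ _ e2) [N1 _ H1] :=
  cvg_proj_geometric_cauchy normc_ReB a_ge0 q_ge0 q_lt1 hu.
have /cvgrPdist_lt /(_ _ e2) [N2 _ H2] :=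
  cvg_proj_geometric_cauchy normc_ImB a_ge0 q_ge0 q_lt1 hu.
exists (N1 + N2)%N => N hN.
have := H1 N (leq_trans (leq_addr _ _) hN); have := H2 N (leq_trans (leq_addl _ _) hN).
rewrite /clim /= !(distrC (lim _)) => hIm hRe.
by apply: le_lt_trans (normc_le_ReIm _) _; rewrite ReB ImB /=; lra.
Qed.

Lemma cvgc_close (u v : nat -> C) (l : C) (p : nat) (a q : R) :
  0 <= a -> 0 <= q -> q < 1 -> cvgc u l ->
  (forall N, normc (v N - u (N + p)%N) <= a * q ^+ (N - p)) -> cvgc v l.
Proof.
move=> a_ge0 q_ge0 q_lt1 ul hv eps e0; have e2 : 0 < eps / 2 by rewrite divr_gt0.
have [N1 H1] := geometric_eventually_lt a_ge0 q_ge0 q_lt1 e2.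
have [N2 H2] := ul _ e2.
exists (N1 + N2 + p)%N => N hN.
have -> : v N - l = (v N - u (N + p)%N) + (u (N + p)%N - l) by ring.
apply: le_lt_trans (le_normcD _ _) _.
have := H1 (N - p)%N ltac:(lia); have := H2 (N + p)%N ltac:(lia); have := hv N; lra.
Qed.

Lemma cvgcMl (c : C) (u : nat -> C) (l : C) :
  cvgc u l -> cvgc (fun N => c * u N) (c * l).
Proof.
move=> ul eps e0; have c1 : 0 < normc c + 1 by rewrite ltr_wpDl ?normc_ge0.
have [N0 H] := ul _ (divr_gt0 e0 c1); exists N0 => N hN.
rewrite -mulrBr normcM; have := H N hN; rewrite ltr_pdivlMr //.
have := normc_ge0 c; have := normc_ge0 (u N - l); nra.
Qed.

Lemma cvgc_eventually_eq (N1 : nat) {u v : nat -> C} {l : C} :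
  cvgc v l -> (forall N, (N1 <= N)%N -> u N = v N) -> cvgc u l.
Proof.
move=> vl uv eps e0; have [N0 H] := vl _ e0.
by exists (N0 + N1)%N => N hN; rewrite uv ?H //; lia.
Qed.

End ComplexLimits.

Section SymmetricProducts.
Context {R : realType}.
Local Notation C := R[i].
Variables (f : int -> C) (K q : R).
Hypotheses (K_ge0 : 0 <= K) (q_ge0 : 0 <= q) (q_lt1 : q < 1)
  (f_near1 : forall b, normc (f b - 1) <= K * q ^+ absz b).

Definition sym_prod (N : nat) : C := \prod_(k < N.*2.+1) f (k%:Z - N%:Z).

Definition shift_prod (e : int) (N : nat) : C := \prod_(k < N.*2.+1) f (k%:Z - N%:Z + e).

Let E := expR (K * ((1 + q) / (1 - q))).

Lemma sum_sym_window_geometric_le N :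
  \sum_(k < N.*2.+1) q ^+ absz (k%:Z - N%:Z) <= (1 + q) / (1 - q).
Proof.
rewrite ler_pdivlMr ?subr_gt0 //.
suff -> : (\sum_(k < N.*2.+1) q ^+ absz (k%:Z - N%:Z)) * (1 - q) = 1 + q - 2 * q ^+ N.+1.
  by rewrite lerBlDr lerDl mulr_ge0 ?exprn_ge0.
elim: N => [|N IHN]; first by rewrite big_ord1 /= expr1 expr0; ring.
rewrite (big_sym_window_succ (fun b => q ^+ absz b)) /=.
set S := \sum_(k < N.*2.+1) _ in IHN *.
have -> : (q ^+ N.+1 + (S + q ^+ N.+1)) * (1 - q) = S * (1 - q) + 2 * q ^+ N.+1 * (1 - q).
  by ring.
by rewrite IHN !exprS; ring.
Qed.

Lemma normc_prod_le {I : Type} (r : seq I) (g : I -> int) :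
  \sum_(i <- r) q ^+ absz (g i) <= (1 + q) / (1 - q) ->
  normc (\prod_(i <- r) f (g i)) <= E.
Proof.
move=> sum_le; rewrite normc_prod.
apply: (@le_trans _ _ (\prod_(i <- r) (1 + K * q ^+ absz (g i)))).
  apply: ler_prod => i _; rewrite normc_ge0 /=.
  have -> : f (g i) = 1 + (f (g i) - 1) by ring.
  by apply: le_trans (le_normcD _ _) _; rewrite normc1 lerD2l.
apply: le_trans (prodD1_le_expR _ _ _) _; first by move=> i; rewrite mulr_ge0 ?exprn_ge0.
by rewrite ler_expR -mulr_sumr ler_wpM2l.
Qed.

Lemma normc_sym_prod_succ_sub N :
  normc (sym_prod N.+1 - sym_prod N) <= E * (2 * K + K ^+ 2) * q * q ^+ N.
Proof.
have -> : sym_prod N.+1 - sym_prod N = sym_prod N * (f (- N.+1%:Z) * f N.+1%:Z - 1).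
  by rewrite /sym_prod (big_sym_window_succ f) /=; ring.
rewrite normcM -!mulrA -exprS; apply: ler_pM; rewrite ?normc_ge0 //.
  exact/normc_prod_le/sum_sym_window_geometric_le.
have := f_near1 (- N.+1%:Z); have := f_near1 N.+1%:Z; rewrite abszN /=.
set x := f (- N.+1%:Z) - 1; set y := f N.+1%:Z - 1 => hy hx.
have -> : f (- N.+1%:Z) * f N.+1%:Z - 1 = x * y + x + y by rewrite /x /y; ring.
have q_le1 : q ^+ N.+1 <= 1 by rewrite exprn_ile1 // ltW.
have xy : normc x * normc y <= K ^+ 2 * q ^+ N.+1.
  apply: le_trans (ler_pM (normc_ge0 _) (normc_ge0 _) hx hy) _.
  rewrite mulrACA -expr2 ler_wpM2l ?sqr_ge0 // -[leRHS]mulr1 ler_wpM2l ?exprn_ge0 //.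
apply: le_trans (le_normcD _ _) _; apply: le_trans (lerD (le_normcD _ _) (lexx _)) _.
rewrite normcM; lra.
Qed.

Lemma sym_prod_cvgc : cvgc sym_prod (clim sym_prod).
Proof.
have c_ge0 : 0 <= E * (2 * K + K ^+ 2) * q.
  by rewrite !mulr_ge0 ?addr_ge0 ?mulr_ge0 ?sqr_ge0 // expR_ge0.
apply: (cvgc_geometric_cauchy _ q_ge0 q_lt1
  (cauchy_geometric_increments c_ge0 q_ge0 q_lt1 normc_sym_prod_succ_sub)).
by rewrite divr_ge0 // subr_ge0 ltW.
Qed.

Lemma normc_tail_prod_sub1_le n (g : 'I_n -> int) (M : nat) :
  (forall k, (M <= absz (g k))%N) ->
  normc (\prod_(k < n) f (g k) - 1) <= n%:R * K * expR (n%:R * K) * q ^+ M.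
Proof.
move=> g_ge.
have -> : \prod_(k < n) f (g k) = \prod_(k < n) (1 + (f (g k) - 1)).
  by apply: eq_bigr => k _; ring.
apply: normc_prodD1_sub1_le => //; first by rewrite exprn_ge0 // exprn_ile1 // ltW.
move=> k; apply: le_trans (f_near1 _) _; rewrite ler_wpM2l //.
exact: ler_wiXn2l (ltW q_lt1) _ _ (g_ge k).
Qed.

Lemma normc_shift_prod_sub e N :
  normc (shift_prod e N - sym_prod (N + absz e)) <=
  E * ((absz e).*2%:R * K * expR ((absz e).*2%:R * K)) * q ^+ (N - absz e).
Proof.
have key (P T : C) (B : R) : normc P <= E -> normc (T - 1) <= B ->
    normc (P - P * T) <= E * B.
  move=> hP hT; rewrite -[X in X - _]mulr1 -mulrBr normcM normcB.
  by apply: ler_pM; rewrite ?normc_ge0.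
have window_le (M : nat) (I : Type) (r : seq I) (g : I -> int) :
    \sum_(i <- r) q ^+ absz (g i) <= \sum_(k < M.*2.+1) q ^+ absz (k%:Z - M%:Z) ->
    normc (\prod_(i <- r) f (g i)) <= E.
  move=> le_sum; apply: normc_prod_le.
  exact: le_trans le_sum (sum_sym_window_geometric_le M).
rewrite -mulrA; case: e => [e|e] /=.
- rewrite /sym_prod (big_sym_window_addn f) [X in _ - X]mulrC; apply: key.
    apply: (window_le (N + e)%N).
    rewrite (big_sym_window_addn (fun b => q ^+ absz b)) lerDr.
    by rewrite sumr_ge0 // => k _; rewrite exprn_ge0.
  by apply: normc_tail_prod_sub1_le => k; have := ltn_ord k; lia.
- have -> : shift_prod (Negz e) N = \prod_(k < N.*2.+1) f (k%:Z - N%:Z - e.+1%:Z).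
    by apply: eq_bigr => k _; rewrite NegzE.
  rewrite /sym_prod (big_sym_window_subn f); apply: key.
    apply: (window_le (N + e.+1)%N).
    rewrite (big_sym_window_subn (fun b => q ^+ absz b)) lerDl.
    by rewrite sumr_ge0 // => k _; rewrite exprn_ge0.
  by apply: normc_tail_prod_sub1_le => k; have := ltn_ord k; lia.
Qed.

Lemma shift_prod_cvgc e : cvgc (shift_prod e) (clim sym_prod).
Proof.
apply: cvgc_close q_ge0 q_lt1 sym_prod_cvgc (normc_shift_prod_sub e).
by rewrite !mulr_ge0 ?expR_ge0.
Qed.

End SymmetricProducts.

Section ArithmeticSums.
Variable F : numFieldType.

Lemma sum_ord_natr n : (\sum_(a < n) (a%:R : F)) * 2 = n%:R * (n%:R - 1).
Proof.
elim: n => [|n IHn]; first by rewrite big_ord0 !mul0r.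
by rewrite big_ord_recr /= mulrDl IHn -natr1; ring.
Qed.

Lemma sum_ord_affine n (c0 c1 : F) :
  \sum_(a < n) (c0 + a%:R * c1) = n%:R * c0 + n%:R * (n%:R - 1) / 2 * c1.
Proof.
rewrite big_split /= sumr_const card_ord -mulr_suml -sum_ord_natr mulr_natl.
by congr (_ + _); field.
Qed.

Lemma intr_binom2 (e : int) : exists k : int, (e%:~R * (e%:~R - 1) / 2 : F) = k%:~R.
Proof.
have two_neq0 : (2 : F) != 0 by rewrite pnatr_eq0.
case: e => n.
- exists (\sum_(j < n) j)%N; apply: (mulIf two_neq0).
  by rewrite -!pmulrn natr_sum sum_ord_natr; field.
- exists (\sum_(j < n.+2) j)%N; apply: (mulIf two_neq0).
  by rewrite -pmulrn natr_sum sum_ord_natr NegzE intrN -pmulrn -!natr1; field.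
Qed.

End ArithmeticSums.

Section LocalBorcherdsProduct.
Context {R : realType}.
Variable d : int.
Hypothesis d_lt0 : d < 0.
Local Notation C := R[i].
Local Notation D := (absz d).

Definition sqrtd : R := Num.sqrt (- d%:~R).

Lemma absd_gt0 : (0 < D)%N.
Proof. by rewrite absz_gt0 ltr0_neq0. Qed.

Lemma intr_d : (d%:~R : R) = - D%:R.
Proof. by rewrite natr_absz ltr0_norm // mulrNz opprK. Qed.

Lemma natr_absd : (D%:R : C) = - d%:~R.
Proof. by rewrite realC_nat realC_int intr_d rmorphN opprK. Qed.

Lemma sqrtd_gt0 : 0 < sqrtd.
Proof. by rewrite sqrtr_gt0 intr_d opprK ltr0n absd_gt0. Qed.

Lemma sqrtd_sqr : sqrtd ^+ 2 = D%:R.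
Proof. by rewrite sqr_sqrtr intr_d opprK. Qed.

Lemma deltaE : delta d = 0 +i* sqrtd :> C.
Proof. by []. Qed.

Lemma omegaE : omega d = (d%:~R / 2) +i* (sqrtd / 2) :> C.
Proof.
rewrite /omega deltaE realC_nat -fmorphV; apply/eqP; rewrite eq_complex /=.
by apply/andP; split; apply/eqP; ring.
Qed.

Lemma intr_omegaE (a b : int) :
  a%:~R + b%:~R * omega d = (a%:~R + b%:~R * (d%:~R / 2)) +i* (b%:~R * (sqrtd / 2)) :> C.
Proof.
rewrite !realC_int omegaE; apply/eqP; rewrite eq_complex /=.
by apply/andP; split; apply/eqP; ring.
Qed.

Lemma Im_natr_omega (a : nat) (b : int) :
  complex.Im (a%:R + b%:~R * omega d : C) = b%:~R * (sqrtd / 2).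
Proof. by rewrite -[a%:R]/((a%:Z)%:~R) intr_omegaE. Qed.

Lemma delta_neq0 : delta d != 0 :> C.
Proof.
by rewrite deltaE; apply: contraTneq sqrtd_gt0 => -[->]; rewrite ltxx.
Qed.

Lemma delta_sqr : delta d * delta d = d%:~R :> C.
Proof.
rewrite deltaE realC_int intr_d; apply/eqP; rewrite eq_complex /= -sqrtd_sqr.
by apply/andP; split; apply/eqP; ring.
Qed.

Lemma conjc_delta : conjc (delta d) = - delta d :> C.
Proof. by rewrite deltaE /=; apply/eqP; rewrite eq_complex /= oppr0 !eqxx. Qed.

Lemma conjc_omega : conjc (omega d) = d%:~R - omega d :> C.
Proof.
rewrite omegaE realC_int /=; apply/eqP; rewrite eq_complex /=.
by apply/andP; split; apply/eqP; field.
Qed.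

Lemma invdeltaE : (delta d)^-1 = 0 +i* (- sqrtd^-1) :> C.
Proof.
have s_neq0 : sqrtd != 0 by rewrite gt_eqF ?sqrtd_gt0.
apply: (mulfI delta_neq0); rewrite divff ?delta_neq0 // deltaE /=.
by apply/eqP; rewrite eq_complex /=; apply/andP; split; apply/eqP; field.
Qed.

Lemma dinv_conjc_shift (y : C) : in_dinv d (conjc y) ->
  exists c e : int, conjc (delta d)^-1 * y = (c%:~R + e%:~R * omega d) / D%:R
                    /\ complex.Re y = e%:~R / 2.
Proof.
case=> a [b hab].
have y_eq : y = conjc ((a%:~R + b%:~R * omega d) / delta d).
  by rewrite -hab mulfK ?delta_neq0 // conjcK.
exists (- a - b * d), b; split.
  have -> : y = (a%:~R + b%:~R * conjc (omega d)) / conjc (delta d).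
    by rewrite y_eq rmorphM rmorphD rmorphM fmorphV !rmorph_int.
  rewrite conjc_inv conjc_omega conjc_delta natr_absd.
  by rewrite !intrD !intrN intrM -delta_sqr; field; rewrite ?oppr_eq0 ?mulf_neq0 ?delta_neq0.
have s_neq0 : sqrtd != 0 by rewrite gt_eqF ?sqrtd_gt0.
by rewrite y_eq intr_omegaE invdeltaE /=; field.
Qed.

Definition Psi_row (w : C) (b : int) : C :=
  \prod_(a < D) Psi_factor d w (a%:R + b%:~R * omega d).

Lemma PsiE m (H : 'M[C]_m) (lam z : 'rV[C]_m) :
  Psi d H lam z = clim (sym_prod (Psi_row (herm H z lam))).
Proof. by []. Qed.

Definition qd : R := expR (- (pi * sqrtd / D%:R)).

Definition amp (w : C) : R := expR (2 * pi * `|complex.Im w|).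

Lemma qd_ge0 : 0 <= qd.
Proof. exact: expR_ge0. Qed.

Lemma qd_lt1 : qd < 1.
Proof.
by rewrite expR_lt1 oppr_lt0 !divr_gt0 ?mulr_gt0 ?pi_gt0 ?sqrtd_gt0 // ltr0n absd_gt0.
Qed.

Lemma Psi_factor_near1 (w : C) (a : nat) (b : int) :
  normc (Psi_factor d w (a%:R + b%:~R * omega d) - 1) <= amp w * qd ^+ absz b.
Proof.
rewrite /Psi_factor addrAC subrr add0r normcN normc_ee /amp /qd.
rewrite -expRM_natl -expRD ler_expR sgn0E Im_natr_omega Im_realCM ImD Im_divr_nat Im_natr_omega.
rewrite pmulr_lge0 ?divr_gt0 ?sqrtd_gt0 // (natr_absz _ b) (intr_norm _ b).
have c_gt0 : 0 < sqrtd / D%:R by rewrite divr_gt0 ?sqrtd_gt0 // ltr0n absd_gt0.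
have -> : pi * sqrtd / D%:R = pi * (sqrtd / D%:R) by rewrite mulrA.
have -> : b%:~R * (sqrtd / 2) / D%:R = b%:~R * (sqrtd / D%:R) / 2 :> R by ring.
have := pi_gt0 R; have := ler_norm (complex.Im w); have := ler_norm (- complex.Im w).
rewrite normrN; set u := complex.Im w; set t : R := b%:~R; set c := sqrtd / D%:R.
by case: (lerP 0 t) => t0; [rewrite ger0_norm | rewrite ltr0_norm]; nra.
Qed.

Definition row_const (w : C) : R := D%:R * amp w * expR (D%:R * amp w).

Lemma Psi_row_near1 (w : C) (b : int) :
  normc (Psi_row w b - 1) <= row_const w * qd ^+ absz b.
Proof.
have -> : Psi_row w b = \prod_(a < D) (1 + (Psi_factor d w (a%:R + b%:~R * omega d) - 1)).
  by apply: eq_bigr => a _; ring.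
apply: normc_prodD1_sub1_le; first exact: expR_ge0.
  by rewrite exprn_ge0 ?qd_ge0 // exprn_ile1 ?qd_ge0 // ltW ?qd_lt1.
by move=> a; exact: Psi_factor_near1.
Qed.

Definition factor_sgn (w s beta : C) : C := 1 - ee (s * (w + beta / D%:R)).

Definition row_sgn (w s : C) (b : int) : C :=
  \prod_(a < D) factor_sgn w s (a%:R + b%:~R * omega d).

Definition sg (b : int) : C := sgn0 (b%:~R : R).

Lemma sgE (b : int) : sg b = if 0 <= b then 1 else -1.
Proof. by rewrite /sg /sgn0 ler0z. Qed.

Lemma natr_absd_neq0 : (D%:R : C) != 0.
Proof. by rewrite pnatr_eq0 -lt0n absd_gt0. Qed.

Lemma factor_sgnDD (w s beta : C) : s = 1 \/ s = -1 ->
  factor_sgn w s (beta + D%:R) = factor_sgn w s beta.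
Proof.
move=> s_pm1; rewrite /factor_sgn.
have -> : s * (w + (beta + D%:R) / D%:R) = s * (w + beta / D%:R) + s.
  by field; exact: natr_absd_neq0.
by case: s_pm1 => ->; [rewrite -[1]/(1%:~R) | rewrite -[-1]/((-1)%:~R)]; rewrite ee_addz.
Qed.

Lemma sg_pm1 (b : int) : sg b = 1 \/ sg b = -1.
Proof. by rewrite sgE; case: ifP; [left | right]. Qed.

Lemma sgn0_Im_omega (a : nat) (b : int) :
  sgn0 (complex.Im (a%:R + b%:~R * omega d : C)) = sg b.
Proof. by rewrite /sg /sgn0 Im_natr_omega pmulr_lge0 // divr_gt0 ?sqrtd_gt0. Qed.

Lemma Psi_row_sgn (w : C) (b : int) : Psi_row w b = row_sgn w (sg b) b.
Proof. by apply: eq_bigr => a _; rewrite /Psi_factor sgn0_Im_omega. Qed.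

Lemma Psi_row_shift (w : C) (c e b : int) :
  \prod_(a < D) Psi_factor d (w + (c%:~R + e%:~R * omega d) / D%:R) (a%:R + b%:~R * omega d)
  = row_sgn w (sg b) (b + e).
Proof.
pose F (x : int) := factor_sgn w (sg b) (x%:~R + (b + e)%:~R * omega d).
have F_period x : F (x + D%:Z) = F x.
  rewrite /F; have -> : (x + D%:Z)%:~R + (b + e)%:~R * omega d =
      (x%:~R + (b + e)%:~R * omega d) + D%:R :> C by rewrite intrD -pmulrn; ring.
  exact/factor_sgnDD/sg_pm1.
(* the shift by c only permutes the residues a modulo |d| *)
rewrite -[RHS](big_int_period _ _ c F_period); apply: eq_bigr => a _.
rewrite /Psi_factor sgn0_Im_omega /F /factor_sgn !intrD.
by congr (1 - ee (_ * _)); field; exact: natr_absd_neq0.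
Qed.

Definition flip_factor (w s : C) (b : int) : C :=
  \prod_(a < D) (- ee (- s * (w + (a%:R + b%:~R * omega d) / D%:R))).

Lemma row_sgnN (w s : C) (b : int) : row_sgn w (- s) b = flip_factor w s b * row_sgn w s b.
Proof.
rewrite /row_sgn /flip_factor -big_split; apply: eq_bigr => a _ /=.
rewrite /factor_sgn mulNr; set y := s * _.
(* 1 - e(-y) = -e(-y) (1 - e(y)) *)
by rewrite mulrBr mulr1 mulNr opprK eeNK; ring.
Qed.

Lemma flip_factor_pos (w : C) (b : int) :
  flip_factor w 1 b = ee (2^-1 - D%:R * w - b%:~R * omega d).
Proof.
rewrite /flip_factor (eq_bigr (fun a : 'I_D =>
    ee ((2^-1 - (w + b%:~R * omega d / D%:R)) + a%:R * - (D%:R)^-1))); last first.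
  by move=> a _; rewrite oppr_ee; congr ee; field; exact: natr_absd_neq0.
by rewrite prod_ee sum_ord_affine; congr ee; field; exact: natr_absd_neq0.
Qed.

Lemma flip_factor_neg (w : C) (b : int) :
  flip_factor w (-1) b = ee (- 2^-1 + D%:R * w + b%:~R * omega d).
Proof.
rewrite /flip_factor (eq_bigr (fun a : 'I_D =>
    ee ((2^-1 + (w + b%:~R * omega d / D%:R)) + a%:R * (D%:R)^-1))); last first.
  by move=> a _; rewrite oppr_ee; congr ee; field; exact: natr_absd_neq0.
rewrite prod_ee sum_ord_affine -[RHS](ee_addz _ D%:Z); congr ee.
by rewrite -pmulrn; field; exact: natr_absd_neq0.
Qed.

Definition automorphy_factor (w : C) (e : int) : C :=
  ee (e%:~R / 2 - e%:~R * D%:R * w - omega d * (e%:~R * (e%:~R - 1) / 2)).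

Lemma prod_flip_factor_pos (w : C) (e N : nat) : (e <= N)%N ->
  \prod_(k < N.*2.+1) (if (N - e <= k < N)%N then flip_factor w 1 (k%:Z - N%:Z + e%:Z) else 1)
  = automorphy_factor w e.
Proof.
move=> eN; rewrite (big_ord_window (fun k => flip_factor w 1 (k%:Z - N%:Z + e%:Z))); last by lia.
rewrite -{1}(add0n (N - e)%N) big_addn subKn // big_mkord.
rewrite (eq_bigr (fun j : 'I_e => ee ((2^-1 - D%:R * w) + j%:R * - omega d))); last first.
  move=> j _; rewrite flip_factor_pos; congr ee.
  have -> : (j + (N - e))%:Z - N%:Z + e%:Z = j%:Z by lia.
  by rewrite -pmulrn; ring.
by rewrite prod_ee sum_ord_affine /automorphy_factor -pmulrn; congr ee; field.
Qed.

Lemma prod_flip_factor_neg (w : C) (e N : nat) : (e.+1 <= N)%N ->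
  \prod_(k < N.*2.+1) (if (N <= k < N + e.+1)%N then flip_factor w (-1) (k%:Z - N%:Z + Negz e) else 1)
  = automorphy_factor w (Negz e).
Proof.
move=> eN; rewrite (big_ord_window (fun k => flip_factor w (-1) (k%:Z - N%:Z + Negz e))); last by lia.
rewrite -{1}(add0n N) big_addn addKn big_mkord.
rewrite (eq_bigr (fun j : 'I_e.+1 =>
    ee ((- 2^-1 + D%:R * w - e.+1%:R * omega d) + j%:R * omega d))); last first.
  move=> j _; rewrite flip_factor_neg; congr ee.
  have -> : (j + N)%:Z - N%:Z + Negz e = j%:Z - e.+1%:Z by rewrite NegzE; lia.
  by rewrite intrB -!pmulrn; ring.
by rewrite prod_ee sum_ord_affine /automorphy_factor NegzE intrN -pmulrn; congr ee; field.
Qed.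

Lemma sg_eq (b b' : int) : (sg b == sg b') = ((0 <= b) == (0 <= b')).
Proof.
have one_neq : (1 : C) == -1 = false.
  by apply/negbTE; rewrite -subr_eq0 opprK -[1 + 1]/(2%:R : C) pnatr_eq0.
by rewrite !sgE; do 2 case: ifP => _; rewrite ?eqxx ?one_neq ?(eq_sym (-1)) ?one_neq.
Qed.

Lemma row_sgn_sg (w : C) (b b' : int) :
  row_sgn w (sg b) b' =
  (if (0 <= b) == (0 <= b') then 1 else flip_factor w (sg b') b') * Psi_row w b'.
Proof.
rewrite Psi_row_sgn -sg_eq; case: eqP => [-> | neq]; first by rewrite mul1r.
suff -> : sg b = - sg b' :> C by rewrite row_sgnN.
have [e' | e'] := sg_pm1 b'; have [e | e] := sg_pm1 b; rewrite e e' in neq *.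
- by case: (neq erefl).
- by [].
- by rewrite opprK.
- by case: (neq erefl).
Qed.

Lemma sym_prod_Psi_row_shift (w : C) (c e : int) (N : nat) : (absz e <= N)%N ->
  sym_prod (Psi_row (w + (c%:~R + e%:~R * omega d) / D%:R)) N =
  automorphy_factor w e * shift_prod (Psi_row w) e N.
Proof.
move=> eN; rewrite /sym_prod /shift_prod.
under eq_bigr => k _ do rewrite /Psi_row Psi_row_shift row_sgn_sg.
case: e eN => [e|e] /= eN.
- rewrite -(prod_flip_factor_pos w _ _ eN) -big_split; apply: eq_bigr => k _.
  have -> : ((0 <= k%:Z - N%:Z) == (0 <= k%:Z - N%:Z + e%:Z)) = ~~ (N - e <= k < N)%N.
    by apply/idP/idP; lia.
  rewrite if_neg; case: ifP => win; last by [].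
  by rewrite sgE ifT //; lia.
- rewrite -(prod_flip_factor_neg w _ _ eN) -big_split; apply: eq_bigr => k _.
  have -> : ((0 <= k%:Z - N%:Z) == (0 <= k%:Z - N%:Z + Negz e)) = ~~ (N <= k < N + e.+1)%N.
    by rewrite NegzE; apply/idP/idP; lia.
  rewrite if_neg; case: ifP => win; last by [].
  by rewrite sgE ifF //; apply/negbTE; rewrite NegzE; lia.
Qed.

Lemma clim_sym_prod_Psi_row_shift (w : C) (c e : int) :
  clim (sym_prod (Psi_row (w + (c%:~R + e%:~R * omega d) / D%:R))) =
  automorphy_factor w e * clim (sym_prod (Psi_row w)).
Proof.
have row_const_ge0 : 0 <= row_const w by rewrite !mulr_ge0 ?expR_ge0.
have := shift_prod_cvgc (Psi_row w) (row_const w) qd row_const_ge0 qd_ge0 qd_lt1 (Psi_row_near1 w) e.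
move=> /(cvgcMl (automorphy_factor w e)) /(cvgc_eventually_eq (absz e)) shiftP.
by apply/cvgc_clim/shiftP => N; exact: sym_prod_Psi_row_shift.
Qed.

Lemma Ok_basis_omega (zeta : C) :
  (forall x, in_Ok d x <-> exists a b : int, x = a%:~R + b%:~R * zeta) ->
  complex.Im zeta = complex.Re `|delta d| / 2 ->
  exists a : int, zeta = a%:~R + omega d.
Proof.
move=> basis Im_zeta.
have [a [b zetaE]] : in_Ok d zeta by apply/basis; exists 0, 1; rewrite add0r mul1r.
suff b1 : b = 1 by exists a; rewrite zetaE b1 mul1r.
move: Im_zeta; rewrite zetaE intr_omegaE normc_def deltaE /= expr0n add0r.
rewrite sqrtr_sqr ger0_norm ?(ltW sqrtd_gt0) // -{2}[sqrtd / 2]mul1r => /mulIf.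
have s_neq0 : sqrtd / 2 != 0 by rewrite mulf_neq0 ?invr_eq0 ?pnatr_eq0 // gt_eqF ?sqrtd_gt0.
by move=> /(_ s_neq0) /(@intr_inj R b 1).
Qed.

Lemma automorphy_factorE (w : C) (e a : int) :
  automorphy_factor w e =
  ee (- 2 * D%:R * w * (e%:~R / 2) - 2 * (e%:~R / 2) ^+ 2 * (a%:~R + omega d)
      + e%:~R / 2 * (a%:~R + omega d + 1)).
Proof.
have [k ek] := intr_binom2 C e.
rewrite /automorphy_factor -[LHS](ee_addz _ (- (a * k))) intrN intrM -ek; congr ee.
by field.
Qed.

End LocalBorcherdsProduct.

Section HermitianForm.
Context {R : realType}.
Variables (m : nat) (H : 'M[R[i]]_m).
Local Notation C := R[i].
Implicit Types (x y v : 'rV[C]_m).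

Lemma hermDl x y v : herm H (x + y) v = herm H x v + herm H y v.
Proof. by rewrite /herm !mulmxDl mxE. Qed.

Lemma hermBl x y v : herm H (x - y) v = herm H x v - herm H y v.
Proof. by rewrite /herm !mulmxBl !mxE. Qed.

Lemma hermZl (c : C) x v : herm H (c *: x) v = c * herm H x v.
Proof. by rewrite /herm -!scalemxAl mxE. Qed.

Lemma herm_conj x y : H^T = map_mx conjc H -> herm H y x = conjc (herm H x y).
Proof.
move=> HH; rewrite /herm.
set M := x *m H *m _; have -> : conjc (M 0 0) = map_mx conjc M 0 0 by rewrite [RHS]mxE.
rewrite /M !map_mxM -map_trmx -HH.
have -> : map_mx conjc (map_mx conjc y) = y by apply/matrixP => i j; rewrite !mxE conjcK.
have tr00 (A : 'M[C]_1) : A 0 0 = A^T 0 0 by rewrite mxE.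
by rewrite [RHS]tr00 !trmx_mul !trmxK mulmxA.
Qed.

Lemma herm_heis0_l (l t v lam : 'rV[C]_m) : herm H l lam = 0 ->
  herm H (heis0 H l t v) lam = herm H v lam + herm H v l * herm H t lam.
Proof. by move=> l_lam; rewrite /heis0 !hermBl hermDl !hermZl l_lam !mulr0 !subr0. Qed.

Lemma herm_zpt_l (d : int) (l l' sig : 'rV[C]_m) (tau : C) :
  H^T = map_mx conjc H -> herm H l l = 0 -> herm H sig l = 0 ->
  herm H (zpt d H l l' tau sig) l = conjc (herm H l l').
Proof.
move=> HH ll sig_l.
by rewrite /zpt hermDl hermBl hermZl ll mulr0 subr0 sig_l addr0 herm_conj.
Qed.

End HermitianForm.

Theorem proposition2
  (R : realType) (d : int) (n : nat)
  (* k = Q(sqrt d) imaginary quadratic of discriminant d < 0 *)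
  (hd : neg_fund_disc d)
  (hn : (0 < n)%N)
  (* hermitian k-space V of signature (1, n+1), Gram matrix H *)
  (H : 'M[R[i]]_(n.+2)) (hH : herm_k_sig d H)
  (* even integral full-rank O_k-lattice L *)
  (L : set 'rV[R[i]]_(n.+2)) (hL : is_lattice d L)
  (hLev : even_integral d H L)
  (* primitive isotropic l in L, isotropic l' in L', <l,l'> = delta^{-1} *)
  (l l' : 'rV[R[i]]_(n.+2))
  (hl : primitive d L l) (hll : herm H l l = 0)
  (hl' : dual d H L l') (hl'l' : herm H l' l' = 0)
  (hll' : herm H l l' = (delta d)^-1)
  (* Gamma_l = {[h,t] : h in N Z, t in D_{l,Gamma}}, with N in Q_{>0} and
     D_{l,Gamma} a finite-index sublattice of D *)
  (Nq : rat) (hNq : (0 < Nq)%R)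
  (Dsub : set 'rV[R[i]]_(n.+2))
  (hDsub : Dsub `<=` Dlat H L l l')
  (hDsub0 : Dsub 0)
  (hDsubB : forall x y, Dsub x -> Dsub y -> Dsub (x - y))
  (hDsubfin : exists M : nat, (0 < M)%N /\
                forall x, Dlat H L l l' x -> Dsub (x *+ M))
  (* lambda in L' with q(lambda) < 0 and <lambda, l> = 0 *)
  (lam : 'rV[R[i]]_(n.+2))
  (hlam : dual d H L lam) (hlamneg : herm H lam lam < 0)
  (hlaml : herm H lam l = 0)
  (* [h,t] in Gamma_l *)
  (h : rat) (hh : exists j : int, h = Nq * j%:~R)
  (t : 'rV[R[i]]_(n.+2)) (ht : Dsub t)
  (* z = z(tau, sigma) in U_eps(l) *)
  (eps : R) (heps : (0 < eps)%R)
  (tau : R[i]) (sig : 'rV[R[i]]_(n.+2))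
  (hsig : herm H sig l = 0 /\ herm H sig l' = 0)
  (hsiegel : 2 * (complex.Im tau)%:C * `|delta d| * `|herm H l l'| ^+ 2
               > - herm H sig sig)
  (hU : let z := zpt d H l l' tau sig in
        0 < herm H z z /\
        herm H z z * `|herm H l' l| ^+ 2 / `|herm H z l| ^+ 2 > (eps^-1)%:C)
  (* Psi_lambda(z) != 0, so that J_lambda([h,t], z) is defined *)
  (hPsi : Psi d H lam (zpt d H l l' tau sig) != 0) :
  let z := zpt d H l l' tau sig in
  let J := Psi d H lam (heis0 H l t z) / Psi d H lam z in
  let r := (complex.Re (herm H t lam))%:C in
  forall zeta : R[i],
    (forall x, in_Ok d x <-> exists a b : int, x = a%:~R + b%:~R * zeta) ->
    complex.Im zeta = (complex.Re `|delta d|) / 2 ->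
    J = ee (- 2 * (`|d|%:R) * herm H z lam * r - 2 * r ^+ 2 * zeta
            + r * (zeta + 1)).
Proof.
move=> z J r zeta Ok_zeta Im_zeta.
have d_lt0 : d < 0 by case: hd.
have [H_herm _] := hH.
have l_lam : herm H l lam = 0 by rewrite herm_conj // hlaml rmorph0.
have z_l : herm H z l = conjc (herm H l l') by apply: herm_zpt_l => //; case: hsig.
have tlam_dinv : in_dinv d (conjc (herm H t lam)).
  by rewrite -herm_conj //; apply: hlam.2; have [] := hDsub _ ht.
have [c [e [shift_tlam Re_tlam]]] := dinv_conjc_shift d d_lt0 _ tlam_dinv.
have -> : J = automorphy_factor d (herm H z lam) e.
  have Psi_z : clim (sym_prod (Psi_row d (herm H z lam))) != 0 := hPsi.
  rewrite /J !PsiE herm_heis0_l // z_l hll' shift_tlam.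
  by rewrite clim_sym_prod_Psi_row_shift // mulfK.
have -> : r = e%:~R / 2 by rewrite /r Re_tlam rmorphM fmorphV rmorph_int rmorph_nat.
have [a ->] := Ok_basis_omega d d_lt0 zeta Ok_zeta Im_zeta.
exact: automorphy_factorE.
Qed.
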